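(* Let $R$ be a ring. Let $P$ be a polygon divided into subpolygons $P^1$ and $P^2$ by the dissection $\{(t,v),(v,t)\}$; let $V^\alpha$ be the vertex set of $P^\alpha$ and $U^\alpha=V^\alpha\setminus\{t,v\}$. Let $D^\alpha$ be a dissection of $P^\alpha$ ($\alpha=1,2$) and $D=\{(t,v),(v,t)\}\,\dot\cup\,D^1\,\dot\cup\,D^2$. Let $c^\alpha:\operatorname{diag}P^\alpha\to R$ be a weak frieze with respect to $D^\alpha$ for $\alpha=1,2$, and assume $c^1_{tv}=c^2_{tv}$ and $c^1_{vt}=c^2_{vt}$, and that these elements lie in $R^*$. Then there exists a unique map $c:\operatorname{diag}P\to R$ such that (i) $c|_{\operatorname{diag}P^\alpha}=c^\alpha$ for $\alpha=1,2$, and (ii) $c$ is a weak frieze with respect to $D$. Explicitly, for distinct vertices $i,k$: $c_{ik}=c^1_{ik}$ if $i,k\in V^1$; $c_{ik}=c^2_{ik}$ if $i,k\in V^2$ (these agree when $i,k\in\{t,v\}$); $c_{ik}=c^1_{it}(c^1_{vt})^{-1}c^2_{vk}+c^1_{iv}(c^1_{tv})^{-1}c^2_{tk}$ if $i\in U^1$, $k\in U^2$; and $c_{ik}=c^2_{it}(c^2_{vt})^{-1}c^1_{vk}+c^2_{iv}(c^2_{tv})^{-1}c^1_{tk}$ if $i\in U^2$, $k\in U^1$.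
   Context: $R^*$ denotes the invertible elements of $R$. A polygon is a finite set of at least three vertices with a cyclic ordering (thought of as a convex polygon); a subpolygon is a subset of at least three vertices with induced cyclic ordering. $\operatorname{diag}P$ is the set of ordered pairs of distinct vertices. A diagonal is an edge if its endpoints are neighbours, otherwise internal. $(i,k)$ and $(j,\ell)$ cross if $i,j,k,\ell$ are pairwise distinct with $i<j<k<\ell$ or $i<\ell<k<j$ cyclically. A dissection is a set of internal diagonals closed under reversal with no two crossing; the internal diagonal pair $\{(t,v),(v,t)\}$ divides $P$ into the two subpolygons $P^1,P^2$ whose vertex sets are the vertices on either side of $(t,v)$ together with $t,v$. Write $c_{ik}=c(i,k)$, $c_{xx}=0$. A map $c:\operatorname{diag}P\to R$ is a weak frieze with respect to a dissection $D$ if $c_{rs}\in R^*$ for $(r,s)\in D$ and whenever $(i,k)$ crosses $(r,s)$ with $(r,s),(s,r)\in D$, $c_{ik}=c_{ir}c_{sr}^{-1}c_{sk}+c_{is}c_{rs}^{-1}c_{rk}$. *)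

From mathcomp Require Import all_boot all_order all_algebra.
Set Implicit Arguments. Unset Strict Implicit. Unset Printing Implicit Defensive.
Import GRing.Theory.
Local Open Scope ring_scope.

(* The polygon P is modelled as the vertex set 'I_n (n >= 3), with the
   cyclic ordering 0 -> 1 -> ... -> n-1 -> 0.  A subpolygon is a set
   V : {set 'I_n} of at least three vertices with the induced cyclic order. *)

Definition cyc {n : nat} (a b c : 'I_n) : bool :=
  [|| (a < b < c)%N, (b < c < a)%N | (c < a < b)%N].

Definition distinct4 {n : nat} (a b c d : 'I_n) : bool :=
  [&& a != b, a != c, a != d, b != c, b != d & c != d].

Definition cross {n : nat} (i k j l : 'I_n) : bool :=
  distinct4 i j k l &&
  ((cyc i j k && cyc i k l) || (cyc i l k && cyc i k j)).

Definition is_polygon {n : nat} (V : {set 'I_n}) : Prop := (3 <= #|V|)%N.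

Definition in_diag {n : nat} (V : {set 'I_n}) (p : 'I_n * 'I_n) : bool :=
  [&& p.1 \in V, p.2 \in V & p.1 != p.2].

Definition neighbours {n : nat} (V : {set 'I_n}) (i k : 'I_n) : bool :=
  [forall x in V, ~~ cyc i x k] || [forall x in V, ~~ cyc k x i].

Definition internal_diag {n : nat} (V : {set 'I_n}) (p : 'I_n * 'I_n) : bool :=
  in_diag V p && ~~ neighbours V p.1 p.2.

Definition dissection {n : nat} (V : {set 'I_n}) (D : {set 'I_n * 'I_n}) : Prop :=
  [/\ forall p, p \in D -> internal_diag V p,
      forall r s, (r, s) \in D -> (s, r) \in D
    & forall i k r s, (i, k) \in D -> (r, s) \in D -> ~~ cross i k r s].

(* c : diag V -> R, represented by a function on all pairs of which only the
   values on pairs of distinct vertices of V are relevant. *)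
Definition weak_frieze {R : unitRingType} {n : nat} (V : {set 'I_n})
    (D : {set 'I_n * 'I_n}) (c : 'I_n -> 'I_n -> R) : Prop :=
  (forall r s, (r, s) \in D -> c r s \is a GRing.unit) /\
  (forall i k r s, in_diag V (i, k) -> (r, s) \in D -> (s, r) \in D ->
     cross i k r s ->
     c i k = c i r * (c s r)^-1 * c s k + c i s * (c r s)^-1 * c r k).

Definition side1 {n : nat} (t v : 'I_n) : {set 'I_n} :=
  [set x | (x == t) || (x == v) || cyc t x v].
Definition side2 {n : nat} (t v : 'I_n) : {set 'I_n} :=
  [set x | (x == t) || (x == v) || cyc v x t].

From mathcomp Require Import all_boot all_order all_algebra zify.
Set Implicit Arguments. Unset Strict Implicit. Unset Printing Implicit Defensive.
Import GRing.Theory.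

(* On each side c is forced to be c^1, resp. c^2.  If i and k lie strictly on
   opposite sides, then (i, k) crosses (t, v) and the frieze relation for (t, v)
   forces c_ik to be the given formula; this proves uniqueness.  For existence,
   the only relations needing work are those for a diagonal (r, s) of D^1 (the
   case of D^2 is symmetric) crossed by some (i, k) with, say, k in U^2.  The
   chord (r, s) leaves all of P^2 on one side, so (i, t) and (i, v) also cross
   (r, s) or share an endpoint with it.  With the convention c_xx = 0 the column
   x |-> c_xk on V^1 is a right linear combination of the columns x |-> c^1_xt
   and x |-> c^1_xv, and the frieze relation for (r, s) is right linear in the
   column; symmetrically for rows when i is in U^2. *)

Ltac polygon :=
  rewrite /cross /distinct4 ?inE /cyc -?(inj_eq val_inj) /=; intros;
  repeat match goal with
  | H : is_true (_ && _) |- _ => case/andP: H => ? ?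
  | H : is_true (_ || _) |- _ => case/orP: H => ?
  end; lia.

Section PolygonGeometry.
Variable n : nat.
Implicit Types t v i j k r s x y : 'I_n.

Lemma cross_cyc i k r s :
  cross i k r s = distinct4 i r k s && (cyc r i s != cyc r k s).
Proof. polygon. Qed.

Lemma crossCl i k r s : cross i k r s = cross k i r s.
Proof. by rewrite !cross_cyc /distinct4 /cyc -!(inj_eq val_inj) /=; lia. Qed.

Lemma crossCr i k r s : cross i k r s = cross i k s r.
Proof. by apply/idP/idP; polygon. Qed.

Lemma cross_neq i k r s :
  cross i k r s -> [/\ i != r, i != k, i != s, r != k & k != s].
Proof. by case/andP => /and5P[? ? ? ? /andP[_ ?]]. Qed.

Lemma cyc_neq i j k : cyc i j k -> [/\ i != j, j != k & k != i].
Proof. by rewrite /cyc -!(inj_eq val_inj) /=; split; apply/eqP; lia. Qed.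

Lemma cross_dividing t v i k :
  cross i k t v = (cyc t i v && cyc v k t) || (cyc v i t && cyc t k v).
Proof. polygon. Qed.

Lemma side1C t v : side1 v t = side2 t v.
Proof. by apply/setP => x; rewrite !inE (orbC (x == v)). Qed.

Lemma side2C t v : side2 v t = side1 t v.
Proof. by rewrite -side1C. Qed.

Lemma t_in_side1 t v : t \in side1 t v. Proof. by rewrite inE eqxx. Qed.
Lemma v_in_side1 t v : v \in side1 t v. Proof. by rewrite inE eqxx orbT. Qed.
Lemma t_in_side2 t v : t \in side2 t v. Proof. by rewrite inE eqxx. Qed.
Lemma v_in_side2 t v : v \in side2 t v. Proof. by rewrite inE eqxx orbT. Qed.

Lemma cyc_side1 t v x : cyc t x v -> x \in side1 t v.
Proof. by rewrite inE => ->; rewrite orbT. Qed.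

Lemma cyc_side2 t v x : cyc v x t -> x \in side2 t v.
Proof. by rewrite -side1C; apply: cyc_side1. Qed.

Lemma cyc_notin_side1 t v x : cyc v x t -> x \notin side1 t v.
Proof. polygon. Qed.

Lemma cyc_notin_side2 t v x : cyc t x v -> x \notin side2 t v.
Proof. by rewrite -side1C; apply: cyc_notin_side1. Qed.

Lemma side1_cyc t v x : x \in side1 t v -> x != t -> x != v -> cyc t x v.
Proof. polygon. Qed.

Lemma notin_side1 t v x : t != v -> x \notin side1 t v -> cyc v x t.
Proof. polygon. Qed.

Lemma notin_side2 t v x : t != v -> x \notin side2 t v -> x \in side1 t v.
Proof. polygon. Qed.

Lemma sidesI t v x : x \in side1 t v -> x \in side2 t v -> (x == t) || (x == v).
Proof. polygon. Qed.

Lemma in_side1D t v x : (x \in side1 t v :\: [set t; v]) = cyc t x v.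
Proof. polygon. Qed.

Lemma in_side2D t v x : (x \in side2 t v :\: [set t; v]) = cyc v x t.
Proof. polygon. Qed.

Lemma cross_no_common_side t v i k : t != v ->
  ~~ ((i \in side1 t v) && (k \in side1 t v)) ->
  ~~ ((i \in side2 t v) && (k \in side2 t v)) -> cross i k t v.
Proof. polygon. Qed.

Lemma side1_chord_same_cyc t v r s x y :
  r \in side1 t v -> s \in side1 t v -> x \in side2 t v -> y \in side2 t v ->
  x != r -> x != s -> y != r -> y != s -> cyc r x s = cyc r y s.
Proof. polygon. Qed.

Lemma side1_chord_cross_notin_side2 t v r s x y :
  r \in side1 t v -> s \in side1 t v -> x \in side2 t v ->
  cross x y r s -> y \notin side2 t v.
Proof.
move=> rS sS xS; rewrite cross_cyc => /andP[/and5P[xr _ xs ry /andP[_ ys]]].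
by apply: contra => yS; rewrite (side1_chord_same_cyc rS sS xS yS) // eq_sym.
Qed.

Lemma side1_chord_cross_side2 t v r s x y j :
  r \in side1 t v -> s \in side1 t v -> x \in side2 t v -> j \in side2 t v ->
  cross x y r s -> [|| j == r, j == s | cross j y r s].
Proof.
move=> rS sS xS jS cxy; have yN2 := side1_chord_cross_notin_side2 rS sS xS cxy.
have [xr xy xs ry ys] := cross_neq cxy.
have jy : j != y by apply: contraNneq yN2 => <-.
case: eqP => //= /eqP jr; case: eqP => //= /eqP js.
move: cxy; rewrite !cross_cyc (side1_chord_same_cyc rS sS xS jS) //.
by case/andP => /and5P[_ _ _ _ /andP[rs _]] ->; rewrite /distinct4 jr jy js ry rs ys.
Qed.

End PolygonGeometry.

Local Open Scope ring_scope.

Section Exchange.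
Variables (R : unitRingType) (n : nat).
Implicit Types (a b c : 'I_n -> 'I_n -> R) (V : {set 'I_n}) (D : {set 'I_n * 'I_n}).

Definition exchange a b (i k r s : 'I_n) : R :=
  a i r * (a s r)^-1 * b s k + a i s * (a r s)^-1 * b r k.

Lemma exchangeC a b i k r s : exchange a b i k r s = exchange a b i k s r.
Proof. exact: addrC. Qed.

Definition frieze_at c (r s : 'I_n) : Prop :=
  forall i k, cross i k r s -> c i k = exchange c c i k r s.

Lemma frieze_atC c r s : frieze_at c r s -> frieze_at c s r.
Proof. by move=> fr i k; rewrite -crossCr exchangeC; apply: fr. Qed.

Lemma weak_frieze_at D c r s :
  weak_frieze [set: 'I_n] D c -> (r, s) \in D -> (s, r) \in D -> frieze_at c r s.
Proof.
move=> [_ fr] rsD srD i k cik; have [_ ik _ _ _] := cross_neq cik.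
by apply: fr; rewrite // /in_diag !inE.
Qed.

Definition zero_diag c (x y : 'I_n) : R := if x == y then 0 else c x y.

Lemma zero_diagE c x y : x != y -> zero_diag c x y = c x y.
Proof. by rewrite /zero_diag => /negbTE ->. Qed.

Lemma weak_frieze_zero_diag_r V D c i y r s :
  weak_frieze V D c -> (r, s) \in D -> (s, r) \in D -> r != s ->
  i \in V -> y \in V -> i != r -> i != s -> [|| y == r, y == s | cross i y r s] ->
  c i y = c i r * (c s r)^-1 * zero_diag c s y + c i s * (c r s)^-1 * zero_diag c r y.
Proof.
move=> [cD fr] rsD srD rs iV yV ir isn /or3P[/eqP-> | /eqP-> | ciy].
- by rewrite /zero_diag eqxx eq_sym (negbTE rs) mulr0 addr0 mulrVK // cD.
- by rewrite /zero_diag eqxx (negbTE rs) mulr0 add0r mulrVK // cD.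
have [_ iy _ ry ys] := cross_neq ciy; have sy : s != y by rewrite eq_sym.
by rewrite !zero_diagE //; apply: fr; rewrite // /in_diag /= iV yV.
Qed.

Lemma weak_frieze_zero_diag_l V D c y k r s :
  weak_frieze V D c -> (r, s) \in D -> (s, r) \in D -> r != s ->
  y \in V -> k \in V -> k != r -> k != s -> [|| y == r, y == s | cross y k r s] ->
  c y k = zero_diag c y r * (c s r)^-1 * c s k + zero_diag c y s * (c r s)^-1 * c r k.
Proof.
move=> [cD fr] rsD srD rs yV kV kr ks /or3P[/eqP-> | /eqP-> | cyk].
- by rewrite /zero_diag eqxx (negbTE rs) !mul0r add0r mulrV ?mul1r // cD.
- by rewrite /zero_diag eqxx eq_sym (negbTE rs) !mul0r addr0 mulrV ?mul1r // cD.
have [yr yk ys _ _] := cross_neq cyk.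
by rewrite !zero_diagE //; apply: fr; rewrite // /in_diag /= yV kV.
Qed.

Lemma dissection_diag V D r s : dissection V D -> (r, s) \in D ->
  [/\ (s, r) \in D, r \in V, s \in V & r != s].
Proof. by case=> D_int D_sym _ rsD; have /andP[/and3P[]] := D_int _ rsD; split; auto. Qed.

Lemma weak_frieze_setT D c :
  (forall r s, (r, s) \in D -> c r s \is a GRing.unit) ->
  (forall r s, (r, s) \in D -> (s, r) \in D -> frieze_at c r s) ->
  weak_frieze [set: 'I_n] D c.
Proof. by move=> cD fr; split=> // i k r s _ rsD srD crs; exact: (fr r s rsD srD i k crs). Qed.

End Exchange.

Section Gluing.
Variables (R : unitRingType) (n : nat) (t v : 'I_n) (c1 c2 : 'I_n -> 'I_n -> R).
Implicit Types c : 'I_n -> 'I_n -> R.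

Definition extends_sides c : Prop :=
  (forall i k, in_diag (side1 t v) (i, k) -> c i k = c1 i k) /\
  (forall i k, in_diag (side2 t v) (i, k) -> c i k = c2 i k).

Definition is_gluing c : Prop :=
  [/\ extends_sides c,
      forall i k, cyc t i v -> cyc v k t -> c i k = exchange c1 c2 i k t v
    & forall i k, cyc v i t -> cyc t k v -> c i k = exchange c2 c1 i k t v].

Definition glue : 'I_n -> 'I_n -> R := fun i k =>
  if (i \in side1 t v) && (k \in side1 t v) then c1 i k
  else if (i \in side2 t v) && (k \in side2 t v) then c2 i k
  else if i \in side1 t v then exchange c1 c2 i k t v
  else exchange c2 c1 i k t v.

Lemma extends_sides1 c x y : extends_sides c ->
  x \in side1 t v -> y \in side1 t v -> x != y -> c x y = c1 x y.
Proof. by move=> [ext1 _] xS yS xy; apply: ext1; apply/and3P. Qed.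

Lemma extends_sides2 c x y : extends_sides c ->
  x \in side2 t v -> y \in side2 t v -> x != y -> c x y = c2 x y.
Proof. by move=> [_ ext2] xS yS xy; apply: ext2; apply/and3P. Qed.

Lemma extends_sides_exchange c i k : extends_sides c -> cyc t i v -> cyc v k t ->
  exchange c c i k t v = exchange c1 c2 i k t v.
Proof.
move=> ext tiv vkt; have [ti iv vt] := cyc_neq tiv; have [vk kt tv] := cyc_neq vkt.
have it : i != t by rewrite eq_sym.
have tk : t != k by rewrite eq_sym.
have [iS kS] := (cyc_side1 tiv, cyc_side2 vkt).
have [tS1 vS1] := (t_in_side1 t v, v_in_side1 t v).
have [tS2 vS2] := (t_in_side2 t v, v_in_side2 t v).
rewrite /exchange !(extends_sides1 ext iS) // !(extends_sides2 ext _ kS) //.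
by rewrite (extends_sides1 ext vS1 tS1 vt) (extends_sides1 ext tS1 vS1 tv).
Qed.

Lemma gluing_exchange_tv c i k : is_gluing c -> cyc t i v -> cyc v k t ->
  c i k = exchange c c i k t v.
Proof. by move=> [ext g12 _] tiv vkt; rewrite g12 // extends_sides_exchange. Qed.

Lemma gluing_unique_U1U2 c c' i k :
  is_gluing c -> extends_sides c' -> frieze_at c' t v -> cyc t i v -> cyc v k t ->
  c' i k = c i k.
Proof.
move=> [_ g12 _] ext' fr' tiv vkt.
by rewrite fr' ?extends_sides_exchange ?g12 // cross_dividing tiv vkt.
Qed.

Hypotheses (e_tv : c1 t v = c2 t v) (e_vt : c1 v t = c2 v t).

Lemma glue_is_gluing : is_gluing glue.
Proof.
split; first split.
- by move=> i k /and3P[/= iS kS _]; rewrite /glue iS kS.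
- move=> i k /and3P[/= iS kS]; rewrite /glue iS kS /=; case: ifP => // /andP[iS1 kS1].
  by move: (sidesI iS1 iS) (sidesI kS1 kS) => /orP[]/eqP-> /orP[]/eqP->; rewrite ?eqxx.
- move=> i k tiv vkt; rewrite /glue (cyc_side1 tiv) (negbTE (cyc_notin_side1 vkt)).
  by rewrite (negbTE (cyc_notin_side2 tiv)).
- move=> i k vit tkv; rewrite /glue (negbTE (cyc_notin_side1 vit)).
  by rewrite (negbTE (cyc_notin_side2 tkv)) andbF.
Qed.

Hypotheses (tv : t != v) (u_tv : c1 t v \is a GRing.unit) (u_vt : c1 v t \is a GRing.unit).

Lemma gluing_col c k x : is_gluing c -> cyc v k t -> x \in side1 t v ->
  c x k = zero_diag c1 x t * ((c1 v t)^-1 * c2 v k)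
        + zero_diag c1 x v * ((c1 t v)^-1 * c2 t k).
Proof.
move=> [ext g12 _] vkt xS; have [vk kt _] := cyc_neq vkt; have kS := cyc_side2 vkt.
have tk : t != k by rewrite eq_sym.
have [->|xt] := eqVneq x t.
  rewrite /zero_diag eqxx (negbTE tv) /= mul0r add0r mulVKr //.
  exact: extends_sides2 ext (t_in_side2 t v) kS tk.
have [->|xv] := eqVneq x v.
  rewrite /zero_diag eqxx eq_sym (negbTE tv) /= mul0r addr0 mulVKr //.
  exact: extends_sides2 ext (v_in_side2 t v) kS vk.
by rewrite g12 ?(side1_cyc xS) // !zero_diagE // /exchange !mulrA.
Qed.

Lemma gluing_row c i x : is_gluing c -> cyc v i t -> x \in side1 t v ->
  c i x = c2 i t * (c2 v t)^-1 * zero_diag c1 v x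
        + c2 i v * (c2 t v)^-1 * zero_diag c1 t x.
Proof.
move=> [ext _ g21] vit xS; have [vi it _] := cyc_neq vit; have iS := cyc_side2 vit.
have [->|xt] := eqVneq x t.
  rewrite /zero_diag eqxx eq_sym (negbTE tv) mulr0 addr0 e_vt mulrVK -?e_vt //.
  exact: extends_sides2 ext iS (t_in_side2 t v) it.
have [->|xv] := eqVneq x v.
  rewrite /zero_diag eqxx (negbTE tv) mulr0 add0r e_tv mulrVK -?e_tv //.
  by apply: extends_sides2 ext iS (v_in_side2 t v) _; rewrite eq_sym.
by rewrite g21 ?(side1_cyc xS) // !zero_diagE 1?eq_sym.
Qed.

Variable D1 : {set 'I_n * 'I_n}.
Hypotheses (dis1 : dissection (side1 t v) D1) (fr1 : weak_frieze (side1 t v) D1 c1).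

Lemma gluing_frieze_col c r s i k : is_gluing c -> (r, s) \in D1 -> cross i k r s ->
  k \notin side1 t v -> c i k = exchange c c i k r s.
Proof.
move=> gl rsD crs kN1; have [ext _ _] := gl.
have [srD rS sS rs] := dissection_diag dis1 rsD; have [ir _ isn _ _] := cross_neq crs.
have vkt := notin_side1 tv kN1; have kS2 := cyc_side2 vkt.
rewrite crossCl in crs; have iN2 := side1_chord_cross_notin_side2 rS sS kS2 crs.
have iS := notin_side2 tv iN2.
have [it iv] : i != t /\ i != v.
  by split; apply: contraNneq iN2 => ->; rewrite ?t_in_side2 ?v_in_side2.
rewrite /exchange !(gluing_col gl vkt) // !(extends_sides1 ext iS) //.
rewrite (extends_sides1 ext sS rS) 1?eq_sym // (extends_sides1 ext rS sS rs).
rewrite (zero_diagE c1 it) (zero_diagE c1 iv).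
rewrite (weak_frieze_zero_diag_r fr1 rsD srD rs iS (t_in_side1 t v) ir isn).
  rewrite (weak_frieze_zero_diag_r fr1 rsD srD rs iS (v_in_side1 t v) ir isn).
    by rewrite !mulrDl !mulrDr !mulrA addrACA.
  by rewrite crossCl; exact: side1_chord_cross_side2 rS sS kS2 (v_in_side2 t v) crs.
by rewrite crossCl; exact: side1_chord_cross_side2 rS sS kS2 (t_in_side2 t v) crs.
Qed.

Lemma gluing_frieze_row c r s i k : is_gluing c -> (r, s) \in D1 -> cross i k r s ->
  i \notin side1 t v -> c i k = exchange c c i k r s.
Proof.
move=> gl rsD crs iN1; have [ext _ _] := gl.
have [srD rS sS rs] := dissection_diag dis1 rsD; have [_ _ _ rk ks] := cross_neq crs.
have vit := notin_side1 tv iN1; have iS2 := cyc_side2 vit.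
have kN2 := side1_chord_cross_notin_side2 rS sS iS2 crs; have kS := notin_side2 tv kN2.
have [tk vk] : t != k /\ v != k.
  by split; apply: contraNneq kN2 => <-; rewrite ?t_in_side2 ?v_in_side2.
have kr : k != r by rewrite eq_sym.
rewrite /exchange !(gluing_row gl vit) // !(extends_sides1 ext _ kS) 1?eq_sym //.
rewrite (extends_sides1 ext sS rS) 1?eq_sym // (extends_sides1 ext rS sS rs).
rewrite (zero_diagE c1 vk) (zero_diagE c1 tk).
rewrite (weak_frieze_zero_diag_l fr1 rsD srD rs (v_in_side1 t v) kS kr ks).
  rewrite (weak_frieze_zero_diag_l fr1 rsD srD rs (t_in_side1 t v) kS kr ks).
    by rewrite !mulrDl !mulrDr !mulrA addrACA.
  exact: side1_chord_cross_side2 rS sS iS2 (t_in_side2 t v) crs.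
exact: side1_chord_cross_side2 rS sS iS2 (v_in_side2 t v) crs.
Qed.

Lemma gluing_frieze_side1 c r s : is_gluing c -> (r, s) \in D1 -> frieze_at c r s.
Proof.
move=> gl rsD i k crs.
have [iS|] := boolP (i \in side1 t v); last exact: gluing_frieze_row.
have [kS|] := boolP (k \in side1 t v); last exact: gluing_frieze_col.
have [ext _ _] := gl; have [srD rS sS rs] := dissection_diag dis1 rsD.
have [ir ik isn rk ks] := cross_neq crs.
have [sr sk] : s != r /\ s != k by split; rewrite eq_sym.
rewrite /exchange !(extends_sides1 ext) //.
by case: fr1 => _ fr; apply: fr => //; apply/and3P.
Qed.

End Gluing.

Section GluingSymmetry.
Variables (R : unitRingType) (n : nat).
Implicit Types (t v : 'I_n) (c : 'I_n -> 'I_n -> R).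

Lemma extends_sidesC t v (c1 c2 : 'I_n -> 'I_n -> R) c :
  extends_sides t v c1 c2 c -> extends_sides v t c2 c1 c.
Proof. by case=> ext1 ext2; rewrite /extends_sides (side1C t v) (side2C t v); split. Qed.

Lemma is_gluingC t v (c1 c2 : 'I_n -> 'I_n -> R) c :
  is_gluing t v c1 c2 c -> is_gluing v t c2 c1 c.
Proof.
case=> ext g12 g21; split=> [|i k *|i k *]; first exact: extends_sidesC.
  by rewrite exchangeC; apply: g21.
by rewrite exchangeC; apply: g12.
Qed.

Lemma gluing_frieze_tv t v (c1 c2 : 'I_n -> 'I_n -> R) c :
  is_gluing t v c1 c2 c -> frieze_at c t v.
Proof.
move=> gl i k; rewrite cross_dividing => /orP[/andP[tiv vkt]|/andP[vit tkv]].
  exact: gluing_exchange_tv gl tiv vkt.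
by rewrite exchangeC; apply: (gluing_exchange_tv (is_gluingC gl)).
Qed.

Lemma gluing_unique t v (c1 c2 c c' : 'I_n -> 'I_n -> R) i k : t != v ->
  is_gluing t v c1 c2 c -> extends_sides t v c1 c2 c' -> frieze_at c' t v ->
  i != k -> c' i k = c i k.
Proof.
move=> tv gl ext' fr' ik; have [ext _ _] := gl.
have [/andP[iS kS]|N1] := boolP ((i \in side1 t v) && (k \in side1 t v)).
  by rewrite (extends_sides1 ext iS kS ik) (extends_sides1 ext' iS kS ik).
have [/andP[iS kS]|N2] := boolP ((i \in side2 t v) && (k \in side2 t v)).
  by rewrite (extends_sides2 ext iS kS ik) (extends_sides2 ext' iS kS ik).
move: (cross_no_common_side tv N1 N2); rewrite cross_dividing.
case/orP=> /andP[cyc_i cyc_k]; first exact: gluing_unique_U1U2 gl ext' fr' cyc_i cyc_k.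
have fr'' := frieze_atC fr'.
exact: gluing_unique_U1U2 (is_gluingC gl) (extends_sidesC ext') fr'' cyc_i cyc_k.
Qed.

Lemma gluing_weak_frieze t v D1 D2 (c1 c2 : 'I_n -> 'I_n -> R) c : t != v ->
  dissection (side1 t v) D1 -> dissection (side2 t v) D2 ->
  weak_frieze (side1 t v) D1 c1 -> weak_frieze (side2 t v) D2 c2 ->
  c1 t v = c2 t v -> c1 v t = c2 v t ->
  c1 t v \is a GRing.unit -> c1 v t \is a GRing.unit ->
  is_gluing t v c1 c2 c -> weak_frieze [set: 'I_n] ([set (t, v); (v, t)] :|: D1 :|: D2) c.
Proof.
move=> tv dis1 dis2 fr1 fr2 e_tv e_vt u_tv u_vt gl; have [ext _ _] := gl.
have vt : v != t by rewrite eq_sym.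
have [tS1 vS1] := (t_in_side1 t v, v_in_side1 t v).
have dis2' : dissection (side1 v t) D2 by rewrite side1C.
have fr2' : weak_frieze (side1 v t) D2 c2 by rewrite side1C.
have [u2_tv u2_vt] : c2 t v \is a GRing.unit /\ c2 v t \is a GRing.unit.
  by rewrite -e_tv -e_vt.
apply: weak_frieze_setT => r s; rewrite !inE.
  case/orP=> [/orP[/orP[]|]|] => [/eqP[-> ->]|/eqP[-> ->]|rsD|rsD].
  - by rewrite (extends_sides1 ext tS1 vS1 tv).
  - by rewrite (extends_sides1 ext vS1 tS1 vt).
  - have [_ rS sS rs] := dissection_diag dis1 rsD.
    by rewrite (extends_sides1 ext rS sS rs); apply: (proj1 fr1).
  - have [_ rS sS rs] := dissection_diag dis2 rsD.
    by rewrite (extends_sides2 ext rS sS rs); apply: (proj1 fr2).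
case/orP=> [/orP[/orP[]|]|] => [/eqP[-> ->]|/eqP[-> ->]|rsD|rsD] _.
- exact: gluing_frieze_tv gl.
- exact: frieze_atC (gluing_frieze_tv gl).
- by move: (gluing_frieze_side1 e_tv e_vt tv u_tv u_vt dis1 fr1 gl rsD).
- by move: (gluing_frieze_side1 (esym e_vt) (esym e_tv) vt u2_vt u2_tv dis2' fr2'
              (is_gluingC gl) rsD).
Qed.

End GluingSymmetry.

Theorem lemma2p6 (R : unitRingType) (n : nat) (t v : 'I_n)
    (D1 D2 : {set 'I_n * 'I_n}) (c1 c2 : 'I_n -> 'I_n -> R) :
  (3 <= n)%N ->
  internal_diag [set: 'I_n] (t, v) ->
  dissection (side1 t v) D1 ->
  dissection (side2 t v) D2 ->
  weak_frieze (side1 t v) D1 c1 ->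
  weak_frieze (side2 t v) D2 c2 ->
  c1 t v = c2 t v -> c1 v t = c2 v t ->
  c1 t v \is a GRing.unit -> c1 v t \is a GRing.unit ->
  let D := [set (t, v); (v, t)] :|: D1 :|: D2 in
  let U1 := side1 t v :\: [set t; v] in
  let U2 := side2 t v :\: [set t; v] in
  exists c : 'I_n -> 'I_n -> R,
    [/\ (* (i) restrictions *)
        (forall i k, in_diag (side1 t v) (i, k) -> c i k = c1 i k),
        (forall i k, in_diag (side2 t v) (i, k) -> c i k = c2 i k),
        (* (ii) weak frieze on P w.r.t. D *)
        weak_frieze [set: 'I_n] D c,
        (* explicit formulas *)
        (forall i k, i \in U1 -> k \in U2 ->
           c i k = c1 i t * (c1 v t)^-1 * c2 v k + c1 i v * (c1 t v)^-1 * c2 t k)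
      & (forall i k, i \in U2 -> k \in U1 ->
           c i k = c2 i t * (c2 v t)^-1 * c1 v k + c2 i v * (c2 t v)^-1 * c1 t k)]
    /\ (* uniqueness on diag P *)
        forall c' : 'I_n -> 'I_n -> R,
          (forall i k, in_diag (side1 t v) (i, k) -> c' i k = c1 i k) ->
          (forall i k, in_diag (side2 t v) (i, k) -> c' i k = c2 i k) ->
          weak_frieze [set: 'I_n] D c' ->
          forall i k, i != k -> c' i k = c i k.
Proof.
move=> _ tvI dis1 dis2 fr1 fr2 e_tv e_vt u_tv u_vt D U1 U2.
have tv : t != v by case/andP: tvI => /and3P[].
have gl := glue_is_gluing e_tv e_vt; have [[ext1 ext2] g12 g21] := gl.
exists (glue t v c1 c2); split; first split => //.
- exact: gluing_weak_frieze gl.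
- by move=> i k; rewrite in_side1D in_side2D; apply: g12.
- by move=> i k; rewrite in_side1D in_side2D; apply: g21.
move=> c' ext1' ext2' fr' i k; apply: gluing_unique tv gl _ _ => //.
by apply: weak_frieze_at fr' _ _; rewrite !inE eqxx ?orbT.
Qed.
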